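(* Consider a single group of $N^t$ treated and $N^c$ control units with binary outcomes, where $U$ treated units have outcome 1, $V=N^t-U$ treated units have outcome 0, $\eta$ control units have outcome 1 and $\nu=N^c-\eta$ control units have outcome 0, and any treated unit may be paired with any control unit. Consider all matchings consisting of exactly $M=\min(N^t,N^c)$ disjoint treated–control pairs, and maximize $\chi=(B-C-1)/\sqrt{B+C+1}$ over them. (i) If $N^c>N^t$, there is a maximizing matching in which the unmatched control units consist of exactly $\min(N^c-N^t,\eta)$ units with outcome 1 and $\max(N^c-N^t-\eta,0)$ units with outcome 0. (ii) If $N^t\ge N^c$, there is a maximizing matching in which the unmatched treated units consist of exactly $\min(N^t-N^c,V)$ units with outcome 0 and $\max(U-N^c,0)$ units with outcome 1.
   Context: For a matching (a set of disjoint treated–control pairs), $B$ is the number of pairs in which the treated unit has outcome 1 and the control unit has outcome 0, and $C$ is the number of pairs in which the treated unit has outcome 0 and the control unit has outcome 1. *)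

From Stdlib Require Import Reals.
From mathcomp Require Import all_boot.
Set Implicit Arguments. Unset Strict Implicit. Unset Printing Implicit Defensive.

(* Treated units are 'I_Nt, control units are 'I_Nc; outcomes are booleans
   (true = outcome 1). *)
Definition is_matching (Nt Nc : nat) (P : {set 'I_Nt * 'I_Nc}) : Prop :=
  [/\ #|P| = minn Nt Nc,
      {in P &, forall p q : 'I_Nt * 'I_Nc, p.1 = q.1 -> p = q} &
      {in P &, forall p q : 'I_Nt * 'I_Nc, p.2 = q.2 -> p = q}].

Definition Bcount (Nt Nc : nat) (yt : 'I_Nt -> bool) (yc : 'I_Nc -> bool)
  (P : {set 'I_Nt * 'I_Nc}) : nat :=
  #|[set p in P | yt p.1 && ~~ yc p.2]|.

Definition Ccount (Nt Nc : nat) (yt : 'I_Nt -> bool) (yc : 'I_Nc -> bool)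
  (P : {set 'I_Nt * 'I_Nc}) : nat :=
  #|[set p in P | ~~ yt p.1 && yc p.2]|.

Definition chi_val (B C : nat) : R :=
  Rdiv (Rminus (Rminus (INR B) (INR C)) R1) (sqrt (Rplus (Rplus (INR B) (INR C)) R1)).

Definition chi (Nt Nc : nat) (yt : 'I_Nt -> bool) (yc : 'I_Nc -> bool)
  (P : {set 'I_Nt * 'I_Nc}) : R :=
  chi_val (Bcount yt yc P) (Ccount yt yc P).

Definition unmatched_t (Nt Nc : nat) (P : {set 'I_Nt * 'I_Nc}) : {set 'I_Nt} :=
  [set i | [forall p in P, p.1 != i]].

Definition unmatched_c (Nt Nc : nat) (P : {set 'I_Nt * 'I_Nc}) : {set 'I_Nc} :=
  [set j | [forall p in P, p.2 != j]].

From Stdlib Require Import Reals Lra Psatz Classical.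
From mathcomp Require Import all_boot zify.

(* The objective chi = (B - C - 1) / sqrt (B + C + 1) is
   nondecreasing in B and nonincreasing in C (chi_val_succB, chi_val_succC).
   Hence, if an optimal matching pairs some treated unit i with a control of
   outcome 1 while a control j0 of outcome 0 is left unmatched, re-pairing i
   with j0 ("reassign") keeps the matching optimal: the pair either becomes a
   B-pair (if i has outcome 1) or stops being a C-pair (if i has outcome 0).
   Re-pairing strictly lowers the number of matched controls of outcome 1, so
   iterating from any optimal matching (one exists: a real function attains
   its maximum on a finite set) yields an optimal matching in which either no
   matched control has outcome 1 or no unmatched control has outcome 0.  Since
   exactly Nc - Nt controls are unmatched when Nt <= Nc, simple counting
   gives the unmatched profile of part (i) (optimal_unmatched_profile).
   Part (ii) follows by transposing: swapping the roles of treated and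
   control units and flipping every outcome maps B-pairs to B-pairs and
   C-pairs to C-pairs, so chi is preserved (chi_transpose), while unmatched
   treated units become unmatched controls. *)

Set Implicit Arguments.
Unset Strict Implicit.
Unset Printing Implicit Defensive.

Local Open Scope R_scope.

Lemma div_sqrt_le (a b s t : R) : 0 < s -> 0 < t ->
  (a <= 0 <= b) \/ (0 <= b /\ a * a * t <= b * b * s)
                \/ (a <= 0 /\ b * b * s <= a * a * t) ->
  a / sqrt s <= b / sqrt t.
Proof.
move=> s_gt0 t_gt0 cases.
have rs_gt0 := sqrt_lt_R0 s s_gt0; have rt_gt0 := sqrt_lt_R0 t t_gt0.
have sq_at : Rsqr (a * sqrt t) = a * a * t.
  rewrite Rsqr_mult Rsqr_sqrt; [reflexivity | lra].
have sq_bs : Rsqr (b * sqrt s) = b * b * s.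
  rewrite Rsqr_mult Rsqr_sqrt; [reflexivity | lra].
have cross : a * sqrt t <= b * sqrt s.
  case: cases => [[a_le0 b_ge0] | [[b_ge0 sq] | [a_le0 sq]]].
  - apply: (Rle_trans _ 0).
      rewrite -(Rmult_0_l (sqrt t)); apply: Rmult_le_compat_r; lra.
    apply: Rmult_le_pos; lra.
  - apply: Rsqr_incr_0_var; first (rewrite sq_at sq_bs; exact: sq).
    apply: Rmult_le_pos; lra.
  - apply: Ropp_le_cancel; apply: Rsqr_incr_0_var.
      rewrite -!Rsqr_neg sq_at sq_bs; exact: sq.
    rewrite Ropp_mult_distr_l; apply: Rmult_le_pos; lra.
unfold Rdiv; apply: (Rmult_le_reg_r (sqrt s * sqrt t)); first exact: Rmult_lt_0_compat.
replace (a * / sqrt s * (sqrt s * sqrt t)) with (a * sqrt t) by (field; lra).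
replace (b * / sqrt t * (sqrt s * sqrt t)) with (b * sqrt s) by (field; lra).
exact: cross.
Qed.

Lemma chi_val_succB (B C : nat) : chi_val B C <= chi_val B.+1 C.
Proof.
rewrite /chi_val S_INR; change R1 with 1.
have b_ge0 := pos_INR B; have c_ge0 := pos_INR C.
move: (INR B) (INR C) b_ge0 c_ge0 => b c b_ge0 c_ge0.
apply: div_sqrt_le; [lra | lra |].
have [d_ge1 | d_lt1] := Rle_or_lt 1 (b - c).
  right; left; split; first lra.
  have : 0 <= (b - c - 1) * c by apply: Rmult_le_pos; lra.
  nra.
have [d_ge0 | d_lt0] := Rle_or_lt 0 (b - c); first (left; lra).
right; right; split; [lra | nra].
Qed.

Lemma chi_val_succC (B C : nat) : chi_val B C.+1 <= chi_val B C.
Proof.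
rewrite /chi_val S_INR; change R1 with 1.
have b_ge0 := pos_INR B; have c_ge0 := pos_INR C.
move: (INR B) (INR C) b_ge0 c_ge0 => b c b_ge0 c_ge0.
apply: div_sqrt_le; [lra | lra |].
have [d_ge2 | d_lt2] := Rle_or_lt 2 (b - c); first (right; left; split; [lra | nra]).
have [d_ge1 | d_lt1] := Rle_or_lt 1 (b - c); first (left; lra).
right; right; split; first lra.
have : 0 <= b * (c + 1 - b) by apply: Rmult_le_pos; lra.
nra.
Qed.

Lemma exists_max_on (T : finType) (Pr : T -> Prop) (f : T -> R) :
  (exists x, Pr x) -> exists x, Pr x /\ forall y, Pr y -> f y <= f x.
Proof.
suff max_seq (s : seq T) : (exists2 x, x \in s & Pr x) ->
    exists x, Pr x /\ forall y, y \in s -> Pr y -> f y <= f x.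
  case=> x Px; have [m [Pm m_max]] := max_seq (enum T) (ex_intro2 _ _ x (mem_enum T x) Px).
  by exists m; split=> // y; apply: m_max; rewrite mem_enum.
elim: s => [[x //] | a s IH] [x x_as Px].
have [[z z_s Pz] | no_s] := classic (exists2 z, z \in s & Pr z).
  have [m [Pm m_max]] := IH (ex_intro2 _ _ z z_s Pz).
  have [[Pa le_ma] | a_not_better] := classic (Pr a /\ f m <= f a).
    exists a; split=> // y; rewrite in_cons => /predU1P [-> _ | y_s Py].
      exact: Rle_refl.
    exact: Rle_trans (m_max y y_s Py) le_ma.
  exists m; split=> // y; rewrite in_cons => /predU1P [-> Pa | y_s Py].
    by apply: Rlt_le; apply: Rnot_le_lt => le_ma; apply: a_not_better.
  exact: m_max.
have Pa : Pr a.
  by move: x_as Px; rewrite in_cons => /predU1P [-> // | x_s Px]; case: no_s; exists x.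
exists a; split=> // y; rewrite in_cons => /predU1P [-> _ | y_s Py].
  exact: Rle_refl.
by case: no_s; exists y.
Qed.

Local Close Scope R_scope.

Lemma card_negb (T : finType) (f : pred T) :
  #|[set x | ~~ f x]| = #|T| - #|[set x | f x]|.
Proof.
rewrite [LHS]cardsCs; congr (_ - _).
by apply: eq_card => x; rewrite !inE negbK.
Qed.

Lemma card_sum (T : finType) (A : {set T}) (f : pred T) :
  #|[set x in A | f x]| = \sum_(x in A) f x.
Proof.
rewrite -sum1_card (eq_bigl (fun x => (x \in A) && f x)) => [|x]; last by rewrite inE.
by rewrite big_mkcondr /=; apply: eq_bigr => x _; case: (f x).
Qed.

Lemma card_split_pred (T : finType) (A : {set T}) (f : pred T) :
  #|[set x in A | f x]| + #|[set x in A | ~~ f x]| = #|A|.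
Proof.
by rewrite !card_sum -big_split -sum1_card; apply: eq_bigr => x _; case: (f x).
Qed.

Section Matchings.
Variables Nt Nc : nat.
Implicit Types (P : {set 'I_Nt * 'I_Nc}) (i : 'I_Nt) (j : 'I_Nc).

Lemma unmatched_cE P : unmatched_c P = ~: [set p.2 | p in P].
Proof.
apply/setP => j; rewrite inE in_setC; apply/forall_inP/idP => [all_ne | no_p p p_P].
  by apply/imsetP => -[p p_P j_eq]; have := all_ne p p_P; rewrite j_eq eqxx.
by apply: contraNneq no_p => <-; apply: imset_f.
Qed.

Lemma unmatched_notin P i j : j \in unmatched_c P -> (i, j) \notin P.
Proof.
rewrite unmatched_cE inE; apply: contra => ij_P.
exact: (imset_f (fun p : 'I_Nt * 'I_Nc => p.2) ij_P).
Qed.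

Lemma unmatched_notinD1 P i j1 j0 :
  j0 \in unmatched_c P -> (i, j0) \notin P :\ (i, j1).
Proof. by move/(unmatched_notin i); rewrite inE => /negbTE ->; rewrite andbF. Qed.

Lemma card_unmatched_c P : is_matching P -> #|unmatched_c P| = Nc - minn Nt Nc.
Proof.
case=> card_P _ inj2; rewrite unmatched_cE cardsCs card_ord setCK.
by rewrite (card_in_imset inj2) card_P.
Qed.

Lemma exists_matching : exists P, is_matching P.
Proof.
pose diag (k : 'I_(minn Nt Nc)) :=
  (widen_ord (geq_minl Nt Nc) k, widen_ord (geq_minr Nt Nc) k).
have diag_inj1 k l : (diag k).1 = (diag l).1 -> k = l.
  by move=> /(congr1 val) eq_kl; apply: val_inj.
have diag_inj2 k l : (diag k).2 = (diag l).2 -> k = l.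
  by move=> /(congr1 val) eq_kl; apply: val_inj.
exists [set diag k | k in 'I_(minn Nt Nc)]; split.
- by rewrite card_imset ?card_ord // => k l /(congr1 fst)/diag_inj1.
- by move=> _ _ /imsetP [k _ ->] /imsetP [l _ ->] /diag_inj1 ->.
- by move=> _ _ /imsetP [k _ ->] /imsetP [l _ ->] /diag_inj2 ->.
Qed.

Definition reassign P i j1 j0 : {set 'I_Nt * 'I_Nc} := (i, j0) |: (P :\ (i, j1)).

Lemma reassign_matching P i j1 j0 : is_matching P -> (i, j1) \in P ->
  j0 \in unmatched_c P -> is_matching (reassign P i j1 j0).
Proof.
move=> [card_P inj1 inj2] ij1_P j0_free.
have ij0_new := unmatched_notinD1 i j1 j0_free.
split.
- by rewrite cardsU1 ij0_new (cardsD1 (i, j1) P) ij1_P in card_P *.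
- move=> p q; rewrite !inE => /predU1P [-> | /andP [p_ne p_P]] /predU1P [-> | /andP [q_ne q_P]] //= same1.
  + by move/eqP: q_ne; case; apply: inj1.
  + by move/eqP: p_ne; case; apply: inj1.
  + exact: inj1.
- move=> p q; rewrite !inE => /predU1P [-> | /andP [p_ne p_P]] /predU1P [-> | /andP [q_ne q_P]] //= same2.
  + by move: (unmatched_notin q.1 j0_free); rewrite same2 -surjective_pairing q_P.
  + by move: (unmatched_notin p.1 j0_free); rewrite -same2 -surjective_pairing p_P.
  + exact: inj2.
Qed.

Lemma sum_reassign P i j1 j0 (F : 'I_Nt * 'I_Nc -> nat) : (i, j1) \in P ->
  j0 \in unmatched_c P ->
  \sum_(p in reassign P i j1 j0) F p + F (i, j1) = \sum_(p in P) F p + F (i, j0).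
Proof.
move=> ij1_P j0_free.
rewrite big_setU1 ?unmatched_notinD1 //= [in RHS](big_setD1 (i, j1)) //=.
by rewrite addnAC [RHS]addnAC [F (i, j0) + _]addnC.
Qed.

End Matchings.

Section Optimal.
Variables (Nt Nc : nat) (yt : 'I_Nt -> bool) (yc : 'I_Nc -> bool).
Implicit Types (P : {set 'I_Nt * 'I_Nc}) (i : 'I_Nt) (j : 'I_Nc).

Definition ctrl_ones P := #|[set p in P | yc p.2]|.

Lemma unmatched_ones P : is_matching P ->
  #|[set j in unmatched_c P | yc j]| + ctrl_ones P = #|[set j | yc j]|.
Proof.
case=> _ _ inj2; rewrite -(cardsID (unmatched_c P) [set j | yc j]); congr (_ + _).
  by apply: eq_card => j; rewrite !inE andbC.
have inj2' : {in [set p in P | yc p.2] &, injective (fun p : 'I_Nt * 'I_Nc => p.2)}.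
  by move=> p q; rewrite !inE => /andP [p_P _] /andP [q_P _]; apply: inj2.
rewrite /ctrl_ones -(card_in_imset inj2'); apply: eq_card => j.
rewrite unmatched_cE !inE negbK.
apply/imsetP/andP => [[p /[!inE] /andP [p_P yc_p] ->] | [/imsetP [p p_P ->] yc_p]].
  by split; first exact: imset_f.
by exists p; rewrite ?inE ?p_P.
Qed.

Lemma chi_reassign P i j1 j0 : (i, j1) \in P -> j0 \in unmatched_c P ->
  yc j1 -> ~~ yc j0 -> Rle (chi yt yc P) (chi yt yc (reassign P i j1 j0)).
Proof.
move=> ij1_P j0_free yc1 yc0; rewrite /chi /Bcount /Ccount !card_sum.
have sumB := sum_reassign (fun p => yt p.1 && ~~ yc p.2) ij1_P j0_free.
have sumC := sum_reassign (fun p => ~~ yt p.1 && yc p.2) ij1_P j0_free.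
rewrite /= yc1 (negbTE yc0) !andbT !andbF !addn0 in sumB sumC.
case: (yt i) sumB sumC => /=; rewrite ?addn0 ?addn1 => -> <-.
  exact: chi_val_succB.
exact: chi_val_succC.
Qed.

Lemma ctrl_ones_reassign P i j1 j0 : (i, j1) \in P -> j0 \in unmatched_c P ->
  yc j1 -> ~~ yc j0 -> ctrl_ones (reassign P i j1 j0) < ctrl_ones P.
Proof.
move=> ij1_P j0_free yc1 yc0; rewrite /ctrl_ones !card_sum.
have := sum_reassign (fun p => yc p.2) ij1_P j0_free.
by rewrite /= yc1 (negbTE yc0) addn0 addn1 => <-.
Qed.

Definition optimal P :=
  is_matching P /\ forall Q, is_matching Q -> Rle (chi yt yc Q) (chi yt yc P).

Lemma exists_optimal : exists P, optimal P.
Proof. exact: exists_max_on (@exists_matching Nt Nc). Qed.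

Lemma exists_optimal_saturated : exists P, optimal P /\
  (ctrl_ones P = 0 \/ #|[set j in unmatched_c P | ~~ yc j]| = 0).
Proof.
have [P0 opt_P0] := exists_optimal.
have [n] := ubnP (ctrl_ones P0); elim: n P0 opt_P0 => // n IH P [match_P max_P] small.
have [no_ones | /card_gt0P [[i j1]]] := posnP (ctrl_ones P).
  by exists P; split; [split | left].
rewrite inE => /andP [ij1_P yc1].
have [no_zeros | /card_gt0P [j0]] := posnP #|[set j in unmatched_c P | ~~ yc j]|.
  by exists P; split; [split | right].
rewrite inE => /andP [j0_free yc0].
apply: (IH (reassign P i j1 j0)).
  split; first exact: reassign_matching.
  by move=> Q match_Q; apply: Rle_trans (max_P Q match_Q) (chi_reassign _ _ _ _).
exact: leq_trans (ctrl_ones_reassign ij1_P j0_free yc1 yc0) small.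
Qed.

Lemma optimal_unmatched_profile : Nt <= Nc -> exists P,
  [/\ is_matching P,
      (forall Q, is_matching Q -> Rle (chi yt yc Q) (chi yt yc P)),
      #|[set j in unmatched_c P | yc j]| = minn (Nc - Nt) #|[set j | yc j]| &
      #|[set j in unmatched_c P | ~~ yc j]| = maxn (Nc - Nt - #|[set j | yc j]|) 0].
Proof.
move=> le_NtNc; have [P [[match_P max_P] saturated]] := exists_optimal_saturated.
have free := card_unmatched_c match_P.
have parts := card_split_pred (unmatched_c P) yc.
have ones := unmatched_ones match_P.
have /minn_idPl min_Nt := le_NtNc.
by exists P; split=> //; lia.
Qed.

End Optimal.

Section Transpose.
Variables Nt Nc : nat.
Implicit Types P : {set 'I_Nt * 'I_Nc}.

Definition flip (x : 'I_Nt * 'I_Nc) : 'I_Nc * 'I_Nt := (x.2, x.1).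

Definition transpose P : {set 'I_Nc * 'I_Nt} := flip @: P.

Lemma flip_inj : injective flip.
Proof. by move=> [a b] [c d] [-> ->]. Qed.

Lemma mem_transpose P x : (x \in transpose P) = ((x.2, x.1) \in P).
Proof.
apply/imsetP/idP => [[[a b] ab_P ->] // | x_P].
by exists (x.2, x.1); last case: x x_P.
Qed.

Lemma transpose_matching P : is_matching P -> is_matching (transpose P).
Proof.
case=> card_P inj1 inj2; split.
- by rewrite card_imset ?card_P 1?minnC //; exact: flip_inj.
- move=> [a b] [c d]; rewrite !mem_transpose => ab_P cd_P /= eq_ac.
  by case: (inj2 _ _ ab_P cd_P eq_ac) => -> ->.
- move=> [a b] [c d]; rewrite !mem_transpose => ab_P cd_P /= eq_bd.
  by case: (inj1 _ _ ab_P cd_P eq_bd) => -> ->.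
Qed.

Lemma chi_transpose (yt : 'I_Nt -> bool) (yc : 'I_Nc -> bool) P :
  chi (fun j => ~~ yc j) (fun i => ~~ yt i) (transpose P) = chi yt yc P.
Proof.
rewrite /chi /Bcount /Ccount !card_sum !(big_imset _ (in2W flip_inj)) /=.
by congr chi_val; apply: eq_bigr => p _; rewrite negbK andbC.
Qed.

Lemma unmatched_transpose P : unmatched_c (transpose P) = unmatched_t P.
Proof.
apply/setP => i; rewrite !inE; apply/forall_inP/forall_inP => [all_ne p p_P | all_ne p].
  by case: p p_P => a b ab_P; apply: (all_ne (b, a)); rewrite mem_transpose.
by rewrite mem_transpose => p_P; apply: all_ne p_P.
Qed.

End Transpose.

Lemma transposeK (Nt Nc : nat) (P : {set 'I_Nt * 'I_Nc}) : transpose (transpose P) = P.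
Proof. by apply/setP => x; rewrite !mem_transpose; case: x. Qed.

Theorem claim1 (Nt Nc : nat) (yt : 'I_Nt -> bool) (yc : 'I_Nc -> bool) :
  let U := #|[set i | yt i]| in
  let V := Nt - U in
  let eta := #|[set j | yc j]| in
  (Nt < Nc ->
   exists P : {set 'I_Nt * 'I_Nc},
     [/\ is_matching P,
         (forall Q, is_matching Q -> Rle (chi yt yc Q) (chi yt yc P)),
         #|[set j in unmatched_c P | yc j]| = minn (Nc - Nt) eta &
         #|[set j in unmatched_c P | ~~ yc j]| = maxn (Nc - Nt - eta) 0]) /\
  (Nc <= Nt ->
   exists P : {set 'I_Nt * 'I_Nc},
     [/\ is_matching P,
         (forall Q, is_matching Q -> Rle (chi yt yc Q) (chi yt yc P)),
         #|[set i in unmatched_t P | ~~ yt i]| = minn (Nt - Nc) V &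
         #|[set i in unmatched_t P | yt i]| = maxn (U - Nc) 0]).
Proof.
move=> U V eta; split=> [lt_NtNc | le_NcNt].
  exact: optimal_unmatched_profile (ltnW lt_NtNc).
have [P [match_P max_P zeros ones]] :=
  optimal_unmatched_profile (fun j => ~~ yc j) (fun i => ~~ yt i) le_NcNt.
have nzeros : #|[set i | ~~ yt i]| = V by rewrite card_negb card_ord.
have U_le : U <= Nt by rewrite -[leqRHS](card_ord Nt) max_card.
exists (transpose P); split.
- exact: transpose_matching.
- move=> Q match_Q; rewrite -(chi_transpose yt yc Q) -(chi_transpose yt yc (transpose P)).
  by rewrite transposeK; apply/max_P/transpose_matching.
- by rewrite -unmatched_transpose transposeK zeros nzeros.
- rewrite -unmatched_transpose transposeK.
  have -> : [set i in unmatched_c P | yt i] = [set i in unmatched_c P | ~~ ~~ yt i].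
    by apply/setP => i; rewrite !inE negbK.
  rewrite ones nzeros /V; lia.
Qed.
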